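(* Let $f\in\mathbb{F}[Y,Z]$ and let $g\in\mathbb{F}[Y]$ or $g\in\mathbb{F}[Z]$. Then $\mathrm{maxrank}(M_{fg})\le\mathrm{maxrank}(M_f)$.
   Context: $\mathbb{F}$ is a field, $Y=\{y_1,\dots,y_m\}$ and $Z=\{z_1,\dots,z_m\}$ are disjoint sets of variables. For $f\in\mathbb{F}[Y,Z]$, the polynomial coefficient matrix $M_f$ is the $2^m\times 2^m$ matrix with entries in $\mathbb{F}[Y,Z]$, rows indexed by monic multilinear monomials $p$ in $Y$ and columns by monic multilinear monomials $q$ in $Z$, where $M_f(p,q)=G$ if and only if $f$ can be uniquely written as $f=pq\,G+Q$ with $G$ containing no variable other than those present in $p$ and $q$, and $Q$ having no monomial which is divisible by $pq$ and contains only variables present in $p$ and $q$. For $S:Y\cup Z\to\mathbb{F}$, $M_f|_S$ is obtained by evaluating each entry at $S$, and $\mathrm{maxrank}(M_f)=\max_S\mathrm{rank}(M_f|_S)$. *)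

From HB Require Import structures.
From mathcomp Require Import all_boot all_algebra.
From mathcomp Require Import boolp.
From mathcomp Require Import mpoly.
Set Implicit Arguments. Unset Strict Implicit. Unset Printing Implicit Defensive.
Import GRing.Theory.
Local Open Scope ring_scope.

(* Variables of F[Y,Z]: indices 'I_(m + m); y_i = 'X_(lshift m i), z_j = 'X_(rshift m j). *)

(* The set of variables occurring in the multilinear monomials
   p = prod_{i in A} y_i and q = prod_{j in B} z_j. *)
Definition pqvars (m : nat) (A B : {set 'I_m}) : {set 'I_(m + m)} :=
  (@lshift m m) @: A :|: (@rshift m m) @: B.

(* The entry M_f(p,q) = G, where f = p q G + Q, G only contains variables of p q,
   and Q has no monomial divisible by p q containing only variables of p q.
   The monomials of f that are divisible by pq and only contain variables of pq are
   exactly those whose support is pqvars A B; G collects them divided by pq. *)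
Definition pcm_entry (F : fieldType) (m : nat) (f : {mpoly F[m + m]})
    (A B : {set 'I_m}) : {mpoly F[m + m]} :=
  \sum_(mon <- msupp f | [forall i, (mon i != 0%N) == (i \in pqvars A B)])
     f@_mon *: 'X_[ [multinom (mon i).-1 | i < m + m] ].

(* The polynomial coefficient matrix, rows indexed by subsets A of Y (monomials p),
   columns by subsets B of Z (monomials q), via an enumeration of {set 'I_m}
   (which has 2^m elements). *)
Definition pcm (F : fieldType) (m : nat) (f : {mpoly F[m + m]}) :
    'M[{mpoly F[m + m]}]_(#|{set 'I_m}|, #|{set 'I_m}|) :=
  \matrix_(i, j) pcm_entry f (enum_val i) (enum_val j).

Definition pcm_eval (F : fieldType) (m : nat) (f : {mpoly F[m + m]})
    (S : 'I_(m + m) -> F) : 'M[F]_(#|{set 'I_m}|, #|{set 'I_m}|) :=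
  map_mx (fun G => G.@[S]) (pcm f).

(* maxrank(M_f) = max_S rank(M_f|_S) (ranks are bounded by 2^m). *)
Definition maxrank (F : fieldType) (m : nat) (f : {mpoly F[m + m]}) : nat :=
  \max_(r < (#|{set 'I_m}|).+1 | `[< exists S, \rank (pcm_eval f S) = r >]) (r : nat).

Definition inFY (F : fieldType) (m : nat) (g : {mpoly F[m + m]}) : Prop :=
  forall mon, mon \in msupp g -> forall j : 'I_m, mon (rshift m j) = 0%N.
Definition inFZ (F : fieldType) (m : nat) (g : {mpoly F[m + m]}) : Prop :=
  forall mon, mon \in msupp g -> forall i : 'I_m, mon (lshift m i) = 0%N.

From HB Require Import structures.
From mathcomp Require Import all_boot all_algebra.
From mathcomp Require Import zify.
From mathcomp Require Import bigenough ssrcomplements mpoly.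
From mathcomp Require Import boolp.
Set Implicit Arguments. Unset Strict Implicit. Unset Printing Implicit Defensive.
Import GRing.Theory BigEnough.
Local Open Scope ring_scope.

(* The entry M_f(p,q) is Q_V(f), where V is the set of variables of pq and Q_V
   is the linear map keeping the monomials of support exactly V, divided by x^V.
   Splitting the support of a product of monomials gives
   Q_V(f g) = sum_V' T_{V,V'}(g) Q_V'(f) for explicit linear maps T_{V,V'}.
   If all monomials of g live in a set of variables W, then T_{V,V'}(g) vanishes
   unless V and V' agree outside W, and then only depends on V ∩ W and V' ∩ W.
   With W = Y this yields M_{fg} = T(g) M_f, and with W = Z it yields
   M_{fg} = M_f T(g); evaluating at any S can therefore only lower the rank. *)

Section MonomialLinearExtension.
Variables (n : nat) (R : comNzRingType) (M : lmodType R).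
Implicit Types (p q : {mpoly R[n]}).

Definition mlin (phi : 'X_{1..n} -> M) p : M :=
  \sum_(mon <- msupp p) p@_mon *: phi mon.

Variable phi : 'X_{1..n} -> M.

Lemma mlinwE k p : (msize p <= k)%N ->
  mlin phi p = \sum_(mon : 'X_{1..n < k}) p@_mon *: phi mon.
Proof.
move=> le_pk; rewrite /mlin (big_mksub 'X_{1..n < k}) ?msupp_uniq //=.
  by rewrite big_rmcond //= => mon /memN_msupp_eq0 ->; rewrite scale0r.
by move=> mon /msize_mdeg_lt /leq_trans; apply.
Qed.

Lemma mlin_is_linear : linear (mlin phi).
Proof.
move=> c p q; pose_big_enough k.
  rewrite !(mlinwE (k := k)) // scaler_sumr -big_split /=.
  by apply: eq_bigr => mon _; rewrite mcoeffD mcoeffZ scalerDl scalerA.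
by close.
Qed.

HB.instance Definition _ :=
  GRing.isLinear.Build R {mpoly R[n]} M *:%R (mlin phi) mlin_is_linear.

Lemma mlinX mon : mlin phi 'X_[mon] = phi mon.
Proof. by rewrite /mlin msuppX big_seq1 mcoeffX eqxx scale1r. Qed.

End MonomialLinearExtension.

Lemma mlinM n (R : comNzRingType) (A : algType R) (I : finType)
    (phi : 'X_{1..n} -> A) (psi chi : I -> 'X_{1..n} -> A) (f g : {mpoly R[n]}) :
  (forall m1 m2, phi (m1 + m2)%MM = \sum_j psi j m2 * chi j m1) ->
  mlin phi (f * g) = \sum_j mlin (psi j) g * mlin (chi j) f.
Proof.
move=> phiD; rewrite mpolyME linear_sum big_allpairs /=.
under eq_bigr do under eq_bigr do rewrite linearZ /= mlinX phiD scaler_sumr.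
rewrite exchange_big /=; under [RHS]eq_bigr do rewrite /mlin mulr_suml.
under [RHS]eq_bigr do under eq_bigr do rewrite mulr_sumr.
rewrite [RHS](exchange_big_dep xpredT) //=; apply: eq_bigr => m1 _.
rewrite exchange_big /=; apply: eq_bigr => m2 _; apply: eq_bigr => j _.
by rewrite -scalerAl -scalerAr scalerA mulrC.
Qed.

Section ExactSupport.
Variables (n : nat) (R : comNzRingType).
Implicit Types (V W : {set 'I_n}) (mon : 'X_{1..n}) (f g : {mpoly R[n]}).

Definition mnmsupp mon : {set 'I_n} := [set i | mon i != 0%N].

Definition mnm_dec V mon : 'X_{1..n} :=
  [multinom (if i \in V then (mon i).-1 else mon i) | i < n].

Definition supp_quo V mon : {mpoly R[n]} :=
  if mnmsupp mon == V then 'X_[[multinom (mon i).-1 | i < n]] else 0.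

Definition msupp_quo V f := mlin (supp_quo V) f.

(* x^(m1 + m2) / x^V = (x^m2 / x^(V :\: V')) * (x^m1 / x^V') when V' = supp m1
   and V = supp m2 :|: V'. *)
Definition supp_transfer V V' mon : {mpoly R[n]} :=
  if V == mnmsupp mon :|: V' then 'X_[mnm_dec (V :\: V') mon] else 0.

Definition msupp_transfer V V' g := mlin (supp_transfer V V') g.

Lemma mnmsuppE mon V :
  (mnmsupp mon == V) = [forall i, (mon i != 0%N) == (i \in V)].
Proof.
apply/eqP/forallP => [<- i|eq_supp]; first by rewrite inE.
by apply/setP => i; rewrite inE (eqP (eq_supp i)).
Qed.

Lemma mnmsuppD m1 m2 : mnmsupp (m1 + m2)%MM = mnmsupp m1 :|: mnmsupp m2.
Proof. by apply/setP => i; rewrite !inE mnmDE addn_eq0 negb_and. Qed.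

Lemma supp_quoD V m1 m2 :
  supp_quo V (m1 + m2)%MM =
  \sum_(V' : {set 'I_n}) supp_transfer V V' m2 * supp_quo V' m1.
Proof.
rewrite (bigD1 (mnmsupp m1)) //= big1 ?addr0 => [|V' /negbTE neV']; last first.
  by rewrite /supp_quo eq_sym neV' mulr0.
rewrite /supp_quo /supp_transfer eqxx mnmsuppD setUC eq_sym.
have [defV|] := eqVneq; last by rewrite mul0r.
rewrite -mpolyXD; congr 'X_[_]; apply/mnmP => i.
rewrite !(mnmE, mnmDE) defV !inE.
by case: (m1 i) => [|a]; case: (m2 i) => [|b] /=; lia.
Qed.

Lemma msupp_quoM V f g :
  msupp_quo V (f * g) =
  \sum_(V' : {set 'I_n}) msupp_transfer V V' g * msupp_quo V' f.
Proof. exact/mlinM/supp_quoD. Qed.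

Definition mvars_sub g W := forall mon, mon \in msupp g -> mnmsupp mon \subset W.

Lemma supp_transfer_eq0 W V V' mon : mnmsupp mon \subset W ->
  V :\: W != V' :\: W -> supp_transfer V V' mon = 0.
Proof.
move=> suppW neVV'; rewrite /supp_transfer ifF //; apply: contraNF neVV' => /eqP ->.
rewrite setDUl; move: suppW; rewrite -setD_eq0 => /eqP ->; by rewrite set0U.
Qed.

Lemma supp_transfer_restrict W V V' mon : mnmsupp mon \subset W ->
  V :\: W = V' :\: W ->
  supp_transfer V V' mon = supp_transfer (V :&: W) (V' :&: W) mon.
Proof.
move=> /subsetP suppW /setP eqVW; rewrite /supp_transfer.
have -> : (V :&: W) :\: (V' :&: W) = V :\: V'.
  apply/setP => i; move: (eqVW i); rewrite !inE.
  by case: (i \in V); case: (i \in V'); case: (i \in W).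
congr (if _ then _ else _); apply/eqP/eqP => /setP eqV; apply/setP => i;
  move: (eqV i) (eqVW i) (introT implyP (suppW i)); rewrite !inE;
  by case: (i \in V); case: (i \in V'); case: (i \in W); case: (mon i == 0%N).
Qed.

Lemma msupp_quoM_restrict W V f g : mvars_sub g W ->
  msupp_quo V (f * g) =
  \sum_(V' | V' :\: W == V :\: W)
     msupp_transfer (V :&: W) (V' :&: W) g * msupp_quo V' f.
Proof.
move=> gW; rewrite msupp_quoM (bigID (fun V' => V' :\: W == V :\: W)) /=.
rewrite [X in _ + X]big1 ?addr0 => [|V' neV]; last first.
  rewrite /msupp_transfer /mlin big1_seq ?mul0r // => mon /andP[_ /gW monW].
  by rewrite (supp_transfer_eq0 monW) ?scaler0 // eq_sym.
apply: eq_bigr => V' /eqP eqV; congr (_ * _).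
rewrite /msupp_transfer /mlin; apply: eq_big_seq => mon /gW monW.
by rewrite (supp_transfer_restrict monW (esym eqV)).
Qed.

End ExactSupport.
Section PQVars.
Variable m : nat.
Implicit Types (A B : {set 'I_m}) (V : {set 'I_(m + m)}).

Lemma split_ordP (P : 'I_(m + m) -> Prop) :
  (forall i, P (lshift m i)) -> (forall j, P (rshift m j)) -> forall k, P k.
Proof. by move=> Pl Pr k; rewrite -(splitK k); case: (split k). Qed.

Lemma mem_pqvars_l A B i : (lshift m i \in pqvars A B) = (i \in A).
Proof.
have notr : lshift m i \notin @rshift m m @: B.
  by apply/imsetP => -[j _ /eqP]; rewrite eq_lrshift.
by rewrite in_setU (negbTE notr) orbF (mem_imset _ _ (@lshift_inj m m)).
Qed.

Lemma mem_pqvars_r A B j : (rshift m j \in pqvars A B) = (j \in B).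
Proof.
have notl : rshift m j \notin @lshift m m @: A.
  by apply/imsetP => -[i _ /eqP]; rewrite eq_sym eq_lrshift.
by rewrite in_setU (negbTE notl) (mem_imset _ _ (@rshift_inj m m)).
Qed.
Lemma pqvarsI A B A' B' :
  pqvars A B :&: pqvars A' B' = pqvars (A :&: A') (B :&: B').
Proof.
apply/setP; apply: split_ordP => [i|j];
  by rewrite in_setI !(mem_pqvars_l, mem_pqvars_r) in_setI.
Qed.

Lemma pqvarsD A B A' B' :
  pqvars A B :\: pqvars A' B' = pqvars (A :\: A') (B :\: B').
Proof.
apply/setP; apply: split_ordP => [i|j];
  by rewrite in_setD !(mem_pqvars_l, mem_pqvars_r) in_setD.
Qed.

Lemma eq_pqvars A B A' B' :
  (pqvars A B == pqvars A' B') = (A == A') && (B == B').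
Proof.
apply/eqP/andP => [/setP eqAB | [/eqP-> /eqP->] //].
split; apply/eqP/setP => i; [move: (eqAB (lshift m i)) | move: (eqAB (rshift m i))];
  by rewrite ?mem_pqvars_l ?mem_pqvars_r.
Qed.

Lemma pqvars_parts V :
  pqvars [set i | lshift m i \in V] [set j | rshift m j \in V] = V.
Proof.
by apply/setP; apply: split_ordP => [i|j]; rewrite ?mem_pqvars_l ?mem_pqvars_r inE.
Qed.

Lemma sum_pqvars (M : nmodType) (F : {set 'I_(m + m)} -> M) :
  \sum_V F V = \sum_A \sum_B F (pqvars A B).
Proof.
rewrite pair_big /= (reindex (fun AB => pqvars AB.1 AB.2)) //=.
exists (fun V => ([set i | lshift m i \in V], [set j | rshift m j \in V])) => [[A B] _|V _].
  by congr pair; apply/setP => i; rewrite inE ?mem_pqvars_l ?mem_pqvars_r.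
exact: pqvars_parts.
Qed.
End PQVars.

Section PolynomialCoefficientMatrix.
Variables (F : fieldType) (m : nat).
Implicit Types (f g : {mpoly F[m + m]}) (A B : {set 'I_m}).

Lemma pcm_entryE f A B : pcm_entry f A B = msupp_quo (pqvars A B) f.
Proof.
rewrite /pcm_entry /msupp_quo /mlin big_mkcond; apply: eq_bigr => mon _.
by rewrite /supp_quo mnmsuppE; case: ifP; rewrite ?scaler0.
Qed.

Lemma inFY_mvars_sub g : inFY g -> mvars_sub g (pqvars setT set0).
Proof.
move=> Yg mon /Yg monY; apply/subsetP; apply: split_ordP => [i|j].
  by rewrite mem_pqvars_l in_setT.
by rewrite mem_pqvars_r in_set0 inE monY.
Qed.

Lemma inFZ_mvars_sub g : inFZ g -> mvars_sub g (pqvars set0 setT).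
Proof.
move=> Zg mon /Zg monZ; apply/subsetP; apply: split_ordP => [i|j].
  by rewrite mem_pqvars_l in_set0 inE monZ.
by rewrite mem_pqvars_r in_setT.
Qed.

Lemma pcm_entryM_FY f g A B : inFY g ->
  pcm_entry (f * g) A B = \sum_A'
    msupp_transfer (pqvars A set0) (pqvars A' set0) g * pcm_entry f A' B.
Proof.
move=> /inFY_mvars_sub gY; rewrite pcm_entryE (msupp_quoM_restrict _ _ gY).
rewrite pqvarsD pqvarsI setDT setD0 setIT setI0 big_mkcond sum_pqvars.
apply: eq_bigr => A' _.
under eq_bigr do rewrite pqvarsD pqvarsI setDT setD0 setIT setI0 eq_pqvars eqxx.
by rewrite -big_mkcond big_pred1_eq pcm_entryE.
Qed.

Lemma pcm_entryM_FZ f g A B : inFZ g ->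
  pcm_entry (f * g) A B = \sum_B'
    pcm_entry f A B' * msupp_transfer (pqvars set0 B) (pqvars set0 B') g.
Proof.
move=> /inFZ_mvars_sub gZ; rewrite pcm_entryE (msupp_quoM_restrict _ _ gZ).
rewrite pqvarsD pqvarsI setDT setD0 setIT setI0 big_mkcond sum_pqvars.
rewrite exchange_big; apply: eq_bigr => B' _.
under eq_bigr do rewrite pqvarsD pqvarsI setDT setD0 setIT setI0 eq_pqvars eqxx andbT.
by rewrite -big_mkcond big_pred1_eq pcm_entryE mulrC.
Qed.

Definition pcm_transfer_l g : 'M[{mpoly F[m + m]}]_(#|{set 'I_m}|) :=
  \matrix_(i, k)
    msupp_transfer (pqvars (enum_val i) set0) (pqvars (enum_val k) set0) g.

Definition pcm_transfer_r g : 'M[{mpoly F[m + m]}]_(#|{set 'I_m}|) :=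
  \matrix_(k, j)
    msupp_transfer (pqvars set0 (enum_val j)) (pqvars set0 (enum_val k)) g.

Lemma pcmM_FY f g : inFY g -> pcm (f * g) = pcm_transfer_l g *m pcm f.
Proof.
move=> Yg; apply/matrixP => i j; rewrite !mxE pcm_entryM_FY // big_enum_val.
by apply: eq_bigr => k _; rewrite !mxE.
Qed.

Lemma pcmM_FZ f g : inFZ g -> pcm (f * g) = pcm f *m pcm_transfer_r g.
Proof.
move=> Zg; apply/matrixP => i j; rewrite !mxE pcm_entryM_FZ // big_enum_val.
by apply: eq_bigr => k _; rewrite !mxE.
Qed.

Lemma rank_pcm_evalM f g S : inFY g \/ inFZ g ->
  (\rank (pcm_eval (f * g) S) <= \rank (pcm_eval f S))%N.
Proof.
rewrite /pcm_eval; case=> [/pcmM_FY|/pcmM_FZ] ->; rewrite map_mxM.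
  exact: mxrankM_maxr.
exact: mxrankM_maxl.
Qed.

Lemma leq_maxrank f h :
  (forall S, \rank (pcm_eval h S) <= \rank (pcm_eval f S))%N ->
  (maxrank h <= maxrank f)%N.
Proof.
move=> le_rank; apply/bigmax_leqP => r /asboolP [S <-].
have lt_rank : (\rank (pcm_eval f S) < (#|{set 'I_m}|).+1)%N.
  by rewrite ltnS rank_leq_row.
apply: leq_trans (le_rank S) (leq_bigmax_cond (Ordinal lt_rank) _).
by apply/asboolP; exists S.
Qed.

End PolynomialCoefficientMatrix.

Theorem proposition4 (F : fieldType) (m : nat) (f g : {mpoly F[m + m]}) :
  inFY g \/ inFZ g -> (maxrank (f * g) <= maxrank f)%N.
Proof. by move=> FYZ; apply: leq_maxrank => S; apply: rank_pcm_evalM. Qed.
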